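(* Let $D:\mathbb R^2\setminus\{0\}\to\mathbb R$ be nonnegative, bounded and continuously differentiable, and consider $\ddot x+D(x)\dot x=-x/|x|^3$. Every rectilinear solution $x_*:[-T,0]\to\mathbb R^2\setminus\{0\}$ of this equation is nondegenerate.
   Context: A solution is rectilinear if it has the form $x_*(t)=r_*(t)w_0$ with $w_0$ a fixed unit vector and $r_*>0$. A solution $x_*:[-T,0]\to\mathbb R^2\setminus\{0\}$ is called nondegenerate if the only solution $w:[-T,0]\to\mathbb R^2$ of the variational equation $$\ddot w+\langle\nabla D(x_*(t)),w\rangle\dot x_*(t)+D(x_*(t))\dot w=-\frac{1}{|x_*(t)|^3}w+3\frac{\langle x_*(t),w\rangle}{|x_*(t)|^5}x_*(t)$$ with $w(-T)=0=w(0)$ is $w\equiv0$. *)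

From Stdlib Require Import Reals.
From Coquelicot Require Import Coquelicot.
Open Scope R_scope.


Definition nrm (p : R * R) : R := sqrt (fst p ^ 2 + snd p ^ 2).
Definition dot (p q : R * R) : R := fst p * fst q + snd p * snd q.

(* g is the derivative of f on the closed interval [a,b]
   (one-sided at the endpoints): the difference quotient, restricted to
   increments keeping t+h in [a,b], converges to g t. *)
Definition deriv_on (a b : R) (f g : R -> R) : Prop :=
  forall t, a <= t <= b ->
    filterlim (fun h => (f (t + h) - f t) / h)
      (within (fun h => h <> 0 /\ a <= t + h <= b) (locally 0))
      (locally (g t)).

Definition vderiv_on (a b : R) (f g : R -> R * R) : Prop :=
  deriv_on a b (fun t => fst (f t)) (fun t => fst (g t)) /\
  deriv_on a b (fun t => snd (f t)) (fun t => snd (g t)).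

Definition C1_punctured (D D1 D2 : R * R -> R) : Prop :=
  forall p : R * R, p <> (0, 0) ->
    is_derive (fun s => D (s, snd p)) (fst p) (D1 p) /\
    is_derive (fun s => D (fst p, s)) (snd p) (D2 p) /\
    continuous D1 p /\ continuous D2 p.

Definition is_solution (D : R * R -> R) (T : R) (x : R -> R * R) : Prop :=
  (forall t, -T <= t <= 0 -> x t <> (0, 0)) /\
  exists v a : R -> R * R,
    vderiv_on (-T) 0 x v /\ vderiv_on (-T) 0 v a /\
    forall t, -T <= t <= 0 ->
      fst (a t) + D (x t) * fst (v t) = - fst (x t) / nrm (x t) ^ 3 /\
      snd (a t) + D (x t) * snd (v t) = - snd (x t) / nrm (x t) ^ 3.

Definition rectilinear (T : R) (x : R -> R * R) : Prop :=
  exists (w0 : R * R) (r : R -> R),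
    nrm w0 = 1 /\
    forall t, -T <= t <= 0 -> 0 < r t /\ x t = (r t * fst w0, r t * snd w0).

Definition variational_eq (D D1 D2 : R * R -> R) (T : R)
    (x v w w' w'' : R -> R * R) : Prop :=
  forall t, -T <= t <= 0 ->
    let gw := D1 (x t) * fst (w t) + D2 (x t) * snd (w t) in
    fst (w'' t) + gw * fst (v t) + D (x t) * fst (w' t)
      = - fst (w t) / nrm (x t) ^ 3
        + 3 * dot (x t) (w t) / nrm (x t) ^ 5 * fst (x t) /\
    snd (w'' t) + gw * snd (v t) + D (x t) * snd (w' t)
      = - snd (w t) / nrm (x t) ^ 3
        + 3 * dot (x t) (w t) / nrm (x t) ^ 5 * snd (x t).

Definition nondegenerate (D D1 D2 : R * R -> R) (T : R) (x : R -> R * R) : Prop :=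
  forall v : R -> R * R, vderiv_on (-T) 0 x v ->
  forall w w' w'' : R -> R * R,
    vderiv_on (-T) 0 w w' -> vderiv_on (-T) 0 w' w'' ->
    variational_eq D D1 D2 T x v w w' w'' ->
    w (-T) = (0, 0) -> w 0 = (0, 0) ->
    forall t, -T <= t <= 0 -> w t = (0, 0).

(* Write the rectilinear solution as x = rho (c, s) with c^2 + s^2 = 1 and split a
   variation as w = A (c, s) + B (-s, c).  The variational equation decouples into
   B'' + D B' = -B / rho^3 and A'' + (grad D . w) rho' + D A' = 2 A / rho^3.

   Transverse part: rho itself solves u'' + D u' = -u / rho^3, so the Wronskian
   W = B' rho - B rho' satisfies W' = -D W; by a Gronwall argument W never changes
   sign, hence B / rho, whose derivative is W / rho^2, is monotone and vanishes at
   both ends, so B = 0.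

   Radial part: let G = grad D(x) . (c, s), so that D(x)' = G rho'.  Once B = 0,
   grad D . w = G A, and U = A' + D(x) A satisfies U' = (2 / rho^3) A.  A positive
   value of A would propagate to an endpoint, forward if U >= 0 there (A e^{Mt}
   cannot decrease, M bounding D) or backward if U <= 0 (A' <= 0); this maximum
   principle, applied to A and -A, gives A = 0. *)

From Stdlib Require Import Reals Lra Classical.
From Coquelicot Require Import Coquelicot.
Open Scope R_scope.

(** * Derivatives on a closed interval *)

Lemma ball_R (x e y : R) : ball x e y <-> Rabs (y - x) < e.
Proof. reflexivity. Qed.

Section FilterLimits.
Context {F : (R -> Prop) -> Prop} {FF : Filter F}.

Lemma filterlim_R_eps (f : R -> R) (l : R) :
  filterlim f F (locally l) <-> forall eps : posreal, F (fun y => Rabs (f y - l) < eps).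
Proof. exact (filterlim_locally f l). Qed.

Lemma filterlim_plus_fct (f g : R -> R) (lf lg : R) :
  filterlim f F (locally lf) -> filterlim g F (locally lg) ->
  filterlim (fun y => f y + g y) F (locally (lf + lg)).
Proof.
  intros Hf Hg.
  exact (filterlim_comp_2 f g Rplus Hf Hg (@filterlim_plus R_AbsRing R_NormedModule lf lg)).
Qed.

Lemma filterlim_mult_fct (f g : R -> R) (lf lg : R) :
  filterlim f F (locally lf) -> filterlim g F (locally lg) ->
  filterlim (fun y => f y * g y) F (locally (lf * lg)).
Proof.
  intros Hf Hg. exact (filterlim_comp_2 f g Rmult Hf Hg (@filterlim_mult R_AbsRing lf lg)).
Qed.

End FilterLimits.

Definition increments (a b t : R) : (R -> Prop) -> Prop :=
  within (fun h => h <> 0 /\ a <= t + h <= b) (locally 0).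

Global Instance increments_filter a b t : Filter (increments a b t).
Proof. apply within_filter, locally_filter. Qed.

Lemma increments_forall a b t (P : R -> Prop) :
  (forall h, h <> 0 -> a <= t + h <= b -> P h) -> increments a b t P.
Proof. intros H. unfold increments, within. apply filter_forall. intros h [? ?]; auto. Qed.

Lemma increments_proper a b t : a < b -> a <= t <= b -> ProperFilter' (increments a b t).
Proof.
  intros Hab Ht. split; [|apply increments_filter].
  intros [eps Heps]. pose proof (cond_pos eps) as Heps0.
  destruct (Rle_or_lt (b - t) (t - a)) as [Hleft|Hright].
  - set (m := Rmin (eps / 2) (t - a)).
    assert (0 < m) by (apply Rmin_glb_lt; lra).
    assert (m <= eps / 2) by apply Rmin_l. assert (m <= t - a) by apply Rmin_r.
    apply (Heps (- m)); [apply ball_R; rewrite Rminus_0_r, Rabs_Ropp, Rabs_pos_eq|]; lra.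
  - set (m := Rmin (eps / 2) (b - t)).
    assert (0 < m) by (apply Rmin_glb_lt; lra).
    assert (m <= eps / 2) by apply Rmin_l. assert (m <= b - t) by apply Rmin_r.
    apply (Heps m); [apply ball_R; rewrite Rminus_0_r, Rabs_pos_eq|]; lra.
Qed.

Lemma deriv_on_continuous_at a b f f' t : deriv_on a b f f' -> a <= t <= b ->
  filterlim (fun h => f (t + h)) (increments a b t) (locally (f t)).
Proof.
  intros Hf Ht.
  apply (filterlim_ext_loc (fun h => f t + h * ((f (t + h) - f t) / h))).
  - apply increments_forall. intros h Hh _. field. exact Hh.
  - replace (locally (f t)) with (locally (f t + 0 * f' t)) by (f_equal; ring).
    apply filterlim_plus_fct; [apply filterlim_const|].
    apply filterlim_mult_fct; [|exact (Hf t Ht)].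
    apply (filterlim_filter_le_1 _ (@filter_le_within _ (locally 0) _ _)), filterlim_id.
Qed.

Lemma deriv_on_ext a b f g f2 g2 : deriv_on a b f g ->
  (forall t, a <= t <= b -> f t = f2 t) -> (forall t, a <= t <= b -> g t = g2 t) ->
  deriv_on a b f2 g2.
Proof.
  intros H Ef Eg t Ht. rewrite <- (Eg t Ht).
  apply (filterlim_ext_loc (fun h => (f (t + h) - f t) / h)); [|exact (H t Ht)].
  apply increments_forall. intros h _ Hh. rewrite !Ef; auto.
Qed.

Lemma deriv_on_const a b c : deriv_on a b (fun _ => c) (fun _ => 0).
Proof.
  intros t Ht. apply (filterlim_ext_loc (fun _ => 0)); [|apply filterlim_const].
  apply increments_forall. intros h Hh _. field. exact Hh.
Qed.

Lemma deriv_on_id a b : deriv_on a b (fun t => t) (fun _ => 1).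
Proof.
  intros t Ht. apply (filterlim_ext_loc (fun _ => 1)); [|apply filterlim_const].
  apply increments_forall. intros h Hh _. field. exact Hh.
Qed.

Lemma deriv_on_plus a b f g f' g' : deriv_on a b f f' -> deriv_on a b g g' ->
  deriv_on a b (fun t => f t + g t) (fun t => f' t + g' t).
Proof.
  intros Hf Hg t Ht.
  apply (filterlim_ext_loc (fun h => (f (t + h) - f t) / h + (g (t + h) - g t) / h)).
  - apply increments_forall. intros h Hh _. field. exact Hh.
  - apply filterlim_plus_fct; [apply Hf|apply Hg]; exact Ht.
Qed.

Lemma deriv_on_mult a b f g f' g' : deriv_on a b f f' -> deriv_on a b g g' ->
  deriv_on a b (fun t => f t * g t) (fun t => f' t * g t + f t * g' t).
Proof.
  intros Hf Hg t Ht.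
  apply (filterlim_ext_loc
    (fun h => (f (t + h) - f t) / h * g t + f (t + h) * ((g (t + h) - g t) / h))).
  - apply increments_forall. intros h Hh _. field. exact Hh.
  - apply filterlim_plus_fct.
    + apply filterlim_mult_fct; [exact (Hf t Ht)|apply filterlim_const].
    + apply filterlim_mult_fct; [|exact (Hg t Ht)].
      exact (deriv_on_continuous_at a b f f' t Hf Ht).
Qed.

Lemma deriv_on_scal a b k f f' : deriv_on a b f f' ->
  deriv_on a b (fun t => k * f t) (fun t => k * f' t).
Proof.
  intros Hf.
  apply (deriv_on_ext a b _ _ _ _ (deriv_on_mult a b _ _ _ _ (deriv_on_const a b k) Hf));
    intros; ring.
Qed.

Lemma deriv_on_opp a b f f' : deriv_on a b f f' ->
  deriv_on a b (fun t => - f t) (fun t => - f' t).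
Proof.
  intros Hf. apply (deriv_on_ext a b _ _ _ _ (deriv_on_scal a b (-1) _ _ Hf)); intros; ring.
Qed.

Lemma deriv_on_comp a b (phi dphi f f' : R -> R) :
  (forall t, a <= t <= b -> is_derive phi (f t) (dphi (f t))) -> deriv_on a b f f' ->
  deriv_on a b (fun t => phi (f t)) (fun t => dphi (f t) * f' t).
Proof.
  intros Hphi Hf t Ht.
  set (y := f t). set (l := dphi y).
  (* Caratheodory's form of differentiability: [slope] is continuous at 0. *)
  set (slope := fun k => if Req_EM_T k 0 then l else (phi (y + k) - phi y) / k).
  assert (Hslope : filterlim slope (locally 0) (locally l)).
  { apply filterlim_R_eps. intros eps.
    destruct (proj1 (is_derive_Reals _ _ _) (Hphi t Ht) eps (cond_pos eps)) as [d Hd].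
    exists d. intros k Hk. unfold slope. destruct (Req_EM_T k 0).
    - rewrite Rminus_diag, Rabs_R0. apply cond_pos.
    - apply Hd; auto. change (Rabs (k - 0) < d) in Hk. rewrite Rminus_0_r in Hk. exact Hk. }
  apply (filterlim_ext_loc (fun h => slope (f (t + h) - y) * ((f (t + h) - f t) / h))).
  - apply increments_forall. intros h Hh _. unfold slope.
    destruct (Req_EM_T (f (t + h) - y) 0) as [E|E].
    + replace (f (t + h)) with y by lra. unfold y. rewrite !Rminus_diag. field. exact Hh.
    + replace (y + (f (t + h) - y)) with (f (t + h)) by ring. unfold y in *. field. auto.
  - apply filterlim_mult_fct; [|exact (Hf t Ht)].
    apply (filterlim_comp _ _ _ (fun h => f (t + h) - y) slope _ (locally 0)); [|exact Hslope].
    assert (L := filterlim_plus_fct _ _ _ _ (deriv_on_continuous_at a b f f' t Hf Ht)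
                   (filterlim_const (F := increments a b t) (- y))).
    rewrite Rplus_opp_r in L. exact L.
Qed.

Lemma deriv_on_inv a b f f' : (forall t, a <= t <= b -> f t <> 0) -> deriv_on a b f f' ->
  deriv_on a b (fun t => / f t) (fun t => - f' t / f t ^ 2).
Proof.
  intros Hnz Hf.
  assert (Hinv : forall t, a <= t <= b -> is_derive Rinv (f t) (- / f t ^ 2)).
  { intros t Ht. pose proof (Hnz t Ht). auto_derive; [auto|field; auto]. }
  apply (deriv_on_ext a b _ _ _ _ (deriv_on_comp a b Rinv (fun y => - / y ^ 2) f f' Hinv Hf)).
  - reflexivity.
  - intros t Ht. field. auto.
Qed.

Lemma deriv_on_exp_scal a b k : deriv_on a b (fun t => exp (k * t)) (fun t => k * exp (k * t)).
Proof.
  apply (deriv_on_ext a b _ _ _ _ (deriv_on_comp a b exp exp _ _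
    (fun t _ => is_derive_exp (k * t)) (deriv_on_scal a b k _ _ (deriv_on_id a b)))).
  - reflexivity.
  - intros; ring.
Qed.

Lemma deriv_on_slope a b f f' t : deriv_on a b f f' -> a <= t <= b ->
  forall eps, 0 < eps -> exists d, 0 < d /\ forall h, h <> 0 -> a <= t + h <= b -> Rabs h < d ->
    Rabs ((f (t + h) - f t) / h - f' t) < eps.
Proof.
  intros Hf Ht eps Heps.
  destruct (proj1 (filterlim_R_eps _ _) (Hf t Ht) (mkposreal eps Heps)) as [d Hd].
  exists d. split; [apply cond_pos|]. intros h Hh Hth Hhd. apply (Hd h); [|auto].
  apply ball_R. rewrite Rminus_0_r. exact Hhd.
Qed.

Lemma deriv_on_unique a b f f1 f2 : a < b -> deriv_on a b f f1 -> deriv_on a b f f2 ->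
  forall t, a <= t <= b -> f1 t = f2 t.
Proof.
  intros Hab H1 H2 t Ht.
  exact (filterlim_locally_unique (fun h => (f (t + h) - f t) / h) _ _
           (FF := increments_proper a b t Hab Ht) (H1 t Ht) (H2 t Ht)).
Qed.

Lemma vderiv_on_unique a b f g1 g2 : a < b -> vderiv_on a b f g1 -> vderiv_on a b f g2 ->
  forall t, a <= t <= b -> g1 t = g2 t.
Proof.
  intros Hab [H1 H1'] [H2 H2'] t Ht. apply injective_projections.
  - exact (deriv_on_unique a b _ _ _ Hab H1 H2 t Ht).
  - exact (deriv_on_unique a b _ _ _ Hab H1' H2' t Ht).
Qed.

Lemma vderiv_on_ext a b f g f2 : vderiv_on a b f g ->
  (forall t, a <= t <= b -> f t = f2 t) -> vderiv_on a b f2 g.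
Proof.
  intros [H1 H2] E.
  split; [apply (deriv_on_ext _ _ _ _ _ _ H1)|apply (deriv_on_ext _ _ _ _ _ _ H2)];
    intros t Ht; try rewrite E by exact Ht; reflexivity.
Qed.

Lemma deriv_on_continuous_on a b f f' : deriv_on a b f f' ->
  continuous_on (fun t => a <= t <= b) f.
Proof.
  intros Hf t Ht. apply filterlim_R_eps. intros eps.
  destruct (proj1 (filterlim_R_eps _ _) (deriv_on_continuous_at a b f f' t Hf Ht) eps) as [d Hd].
  exists d. intros z Hz Hzab. change R in z. destruct (Req_dec z t) as [->|Hne].
  - rewrite Rminus_diag, Rabs_R0. apply cond_pos.
  - assert (Hzt := Hd (z - t)). replace (t + (z - t)) with z in Hzt by ring.
    apply Hzt; [apply ball_R; rewrite Rminus_0_r; exact Hz|split; [lra|exact Hzab]].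
Qed.

(** * Monotonicity and sign persistence *)

Lemma real_induction (s b : R) (P : R -> Prop) : s <= b -> P s ->
  (forall y, s < y <= b -> (forall z, s <= z < y -> P z) -> P y) ->
  (forall y, s <= y < b -> (forall z, s <= z <= y -> P z) ->
     exists eta, 0 < eta /\ forall z, y < z < y + eta -> z <= b -> P z) ->
  forall z, s <= z <= b -> P z.
Proof.
  intros Hsb Ps Hclosed Hopen.
  set (E := fun y => s <= y <= b /\ forall z, s <= z <= y -> P z).
  assert (Es : E s) by (split; [lra|]; intros z Hz; replace z with s by lra; exact Ps).
  destruct (completeness E) as [m [Hub Hlub]].
  { exists b. intros y [Hy _]. lra. }
  { exists s. exact Es. }
  assert (Hsm : s <= m) by (apply Hub, Es).
  assert (Hmb : m <= b) by (apply Hlub; intros y [Hy _]; lra).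
  assert (Hbelow : forall z, s <= z < m -> P z).
  { intros z Hz. apply NNPP. intros Hn.
    assert (m <= z); [|lra]. apply Hlub. intros y [Hy HP].
    apply Rnot_lt_le. intros Hzy. apply Hn, HP. lra. }
  assert (Em : forall z, s <= z <= m -> P z).
  { intros z Hz. destruct (Req_dec z m) as [->|]; [|apply Hbelow; lra].
    destruct (Req_dec m s) as [->|]; [exact Ps|]. apply Hclosed; [lra|exact Hbelow]. }
  destruct (Req_dec m b) as [<-|Hmb']; [exact Em|].
  destruct (Hopen m ltac:(lra) Em) as [eta [Heta Hstep]].
  set (y := Rmin (m + eta / 2) b).
  assert (m + eta / 2 >= y) by (apply Rle_ge, Rmin_l).
  assert (y <= b) by apply Rmin_r.
  assert (m < y) by (apply Rmin_glb_lt; lra).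
  assert (y <= m); [|lra].
  apply Hub. split; [lra|]. intros z Hz.
  destruct (Rle_or_lt z m); [apply Em; lra|apply Hstep; lra].
Qed.

Lemma deriv_on_nondecreasing a b f f' s t : deriv_on a b f f' -> a <= s -> s <= t -> t <= b ->
  (forall z, s <= z <= t -> 0 <= f' z) -> f s <= f t.
Proof.
  intros Hf Has Hst Htb Hf'.
  (* The slack [eps] lets the strict slope estimates propagate by real induction. *)
  assert (Hslack : forall eps, 0 < eps -> forall z, s <= z <= t -> f s - eps * (z - s) <= f z).
  { intros eps Heps.
    apply real_induction; [lra|lra|..].
    - intros y Hy IH.
      destruct (deriv_on_slope a b f f' y Hf ltac:(lra) eps Heps) as [d [Hd Hslope]].
      set (h := - Rmin (d / 2) (y - s)).
      assert (0 < Rmin (d / 2) (y - s)) by (apply Rmin_glb_lt; lra).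
      assert (Rmin (d / 2) (y - s) <= d / 2) by apply Rmin_l.
      assert (Rmin (d / 2) (y - s) <= y - s) by apply Rmin_r.
      assert (Hq := Hslope h ltac:(unfold h; lra) ltac:(unfold h; lra)
                      ltac:(unfold h; rewrite Rabs_Ropp, Rabs_pos_eq; lra)).
      assert (Hfh := IH (y + h) ltac:(unfold h; lra)).
      pose proof (Hf' y ltac:(lra)).
      apply Rabs_def2 in Hq. set (q := (f (y + h) - f y) / h) in Hq.
      assert (f y = f (y + h) - q * h) by (unfold q; field; unfold h; lra).
      assert (h < 0) by (unfold h; lra). nra.
    - intros y Hy IH.
      destruct (deriv_on_slope a b f f' y Hf ltac:(lra) eps Heps) as [d [Hd Hslope]].
      exists d. split; [exact Hd|]. intros z Hz Hzt.
      assert (Hq := Hslope (z - y) ltac:(lra) ltac:(lra) ltac:(rewrite Rabs_pos_eq; lra)).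
      replace (y + (z - y)) with z in Hq by ring.
      pose proof (Hf' y ltac:(lra)). pose proof (IH y ltac:(lra)).
      apply Rabs_def2 in Hq. set (q := (f z - f y) / (z - y)) in Hq.
      assert (f z = f y + q * (z - y)) by (unfold q; field; lra). nra. }
  apply Rnot_lt_le. intros Hlt.
  assert (Hts : s < t) by (destruct (Req_dec s t) as [<-|]; lra).
  assert (Heps : 0 < (f s - f t) / (2 * (t - s))) by (apply Rdiv_lt_0_compat; lra).
  pose proof (Hslack _ Heps t ltac:(lra)).
  assert ((f s - f t) / (2 * (t - s)) * (t - s) = (f s - f t) / 2) by (field; lra).
  lra.
Qed.

Lemma continuous_on_interval_eps a b (f : R -> R) t :
  continuous_on (fun z => a <= z <= b) f -> a <= t <= b ->
  forall eps : posreal, exists eta : posreal,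
    forall z, a <= z <= b -> Rabs (z - t) < eta -> Rabs (f z - f t) < eps.
Proof.
  intros Hc Ht eps.
  destruct (proj1 (filterlim_R_eps (F := within _ (locally t)) _ _) (Hc t Ht) eps) as [eta Heta].
  exists eta. intros z Hz Hzt. exact (Heta z Hzt Hz).
Qed.

Lemma continuous_on_pos_forward a b (f : R -> R) t0 :
  continuous_on (fun t => a <= t <= b) f -> a <= t0 <= b -> 0 < f t0 ->
  (forall y, t0 <= y <= b -> (forall z, t0 <= z <= y -> 0 <= f z) -> 0 < f y) ->
  forall z, t0 <= z <= b -> 0 < f z.
Proof.
  intros Hc Ht0 Hf0 Hclosed.
  apply real_induction; [lra|exact Hf0|..].
  - intros y Hy IH. apply Hclosed; [lra|]. intros z Hz.
    destruct (Req_dec z y) as [->|]; [|apply Rlt_le, IH; lra].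
    apply Rnot_lt_le. intros Hneg.
    destruct (continuous_on_interval_eps a b f y Hc ltac:(lra) (mkposreal (- f y) ltac:(lra)))
      as [eta Heta]; simpl in Heta. pose proof (cond_pos eta).
    set (z := Rmax t0 (y - eta / 2)).
    assert (t0 <= z) by apply Rmax_l. assert (y - eta / 2 <= z) by apply Rmax_r.
    assert (z < y) by (apply Rmax_lub_lt; lra).
    pose proof (IH z ltac:(lra)).
    assert (Hz' := Heta z ltac:(lra) ltac:(rewrite Rabs_left; lra)).
    apply Rabs_def2 in Hz'. lra.
  - intros y Hy IH. pose proof (IH y ltac:(lra)) as Hfy.
    destruct (continuous_on_interval_eps a b f y Hc ltac:(lra) (mkposreal (f y) Hfy))
      as [eta Heta]; simpl in Heta.
    exists eta. split; [apply cond_pos|]. intros z Hz Hzb.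
    assert (Hz' := Heta z ltac:(lra) ltac:(rewrite Rabs_pos_eq; lra)).
    apply Rabs_def2 in Hz'. lra.
Qed.

Lemma continuous_on_pos_backward a b (f : R -> R) t0 :
  continuous_on (fun t => a <= t <= b) f -> a <= t0 <= b -> 0 < f t0 ->
  (forall y, a <= y <= t0 -> (forall z, y <= z <= t0 -> 0 <= f z) -> 0 < f y) ->
  forall z, a <= z <= t0 -> 0 < f z.
Proof.
  intros Hc Ht0 Hf0 Hclosed z Hz.
  replace z with (- - z) by ring.
  apply (continuous_on_pos_forward (- b) (- a) (fun u => f (- u)) (- t0));
    [|lra|now rewrite Ropp_involutive| |lra].
  - intros u Hu. apply filterlim_R_eps. intros eps.
    destruct (continuous_on_interval_eps a b f (- u) Hc ltac:(lra) eps) as [d Hd].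
    exists d. intros v Hv Hvab. apply ball_R in Hv. change R in v.
    apply Hd; [lra|]. replace (- v - - u) with (- (v - u)) by ring.
    rewrite Rabs_Ropp. exact Hv.
  - intros y Hy IH. apply Hclosed; [lra|]. intros v Hv.
    replace v with (- - v) by ring. apply IH. lra.
Qed.

(** * Linear differential inequalities *)

Lemma gronwall_zero a b y y' M xi : deriv_on a b y y' ->
  (forall t, a <= t <= b -> Rabs (y' t) <= M * Rabs (y t)) ->
  a <= xi <= b -> y xi = 0 -> forall t, a <= t <= b -> y t = 0.
Proof.
  intros Hy Hbound Hxi Hy0 t Ht.
  assert (Hyy : forall z, a <= z <= b -> - M * (y z * y z) <= y z * y' z <= M * (y z * y z)).
  { intros z Hz. pose proof (Hbound z Hz). pose proof (Rabs_pos (y z)).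
    assert (Habs : Rabs (y z * y' z) <= M * (y z * y z)).
    { assert (E : y z * y z = Rabs (y z) * Rabs (y z))
        by (rewrite <- Rabs_mult; symmetry; apply Rabs_pos_eq; nra).
      rewrite Rabs_mult, E, <- Rmult_assoc, (Rmult_comm M), Rmult_assoc.
      apply Rmult_le_compat_l; assumption. }
    apply Rabs_le_between in Habs. lra. }
  assert (Hweighted : forall k, deriv_on a b (fun z => y z * y z * exp (k * z))
      (fun z => (2 * (y z * y' z) + k * (y z * y z)) * exp (k * z))).
  { intros k. apply (deriv_on_ext a b _ _ _ _
      (deriv_on_mult a b _ _ _ _ (deriv_on_mult a b _ _ _ _ Hy Hy) (deriv_on_exp_scal a b k))).
    - reflexivity.
    - intros; ring. }
  assert (Hgrowth : forall s u, a <= s <= u -> u <= b ->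
    y s * y s * exp (2 * M * s) <= y u * y u * exp (2 * M * u)).
  { intros s u Hs Hu. apply (deriv_on_nondecreasing a b _ _ s u (Hweighted (2 * M))); try lra.
    intros z Hz. pose proof (Hyy z ltac:(lra)). pose proof (exp_pos (2 * M * z)). nra. }
  assert (Hdecay : forall s u, a <= s <= u -> u <= b ->
    y u * y u * exp (- 2 * M * u) <= y s * y s * exp (- 2 * M * s)).
  { intros s u Hs Hu.
    apply Ropp_le_cancel, (deriv_on_nondecreasing a b _ _ s u
      (deriv_on_opp a b _ _ (Hweighted (- 2 * M)))); try lra.
    intros z Hz. pose proof (Hyy z ltac:(lra)). pose proof (exp_pos (- 2 * M * z)). nra. }
  destruct (Rle_or_lt t xi).
  - pose proof (Hgrowth t xi ltac:(lra) ltac:(lra)) as Hw. rewrite Hy0 in Hw.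
    pose proof (exp_pos (2 * M * t)). apply Rsqr_0_uniq. unfold Rsqr. nra.
  - pose proof (Hdecay xi t ltac:(lra) ltac:(lra)) as Hw. rewrite Hy0 in Hw.
    pose proof (exp_pos (- 2 * M * t)). apply Rsqr_0_uniq. unfold Rsqr. nra.
Qed.

Lemma gronwall_sign a b y y' M : a <= b -> deriv_on a b y y' ->
  (forall t, a <= t <= b -> Rabs (y' t) <= M * Rabs (y t)) ->
  (forall t, a <= t <= b -> 0 <= y t) \/ (forall t, a <= t <= b -> y t <= 0).
Proof.
  intros Hab Hy Hbound.
  destruct (Req_dec (y a) 0) as [Hya|Hya].
  { left. intros t Ht. rewrite (gronwall_zero a b y y' M a Hy Hbound ltac:(lra) Hya t Ht). lra. }
  assert (Hnz : forall t, a <= t <= b -> y t <> 0).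
  { intros t Ht Hyt. exact (Hya (gronwall_zero a b y y' M t Hy Hbound Ht Hyt a ltac:(lra))). }
  assert (Hsame : forall t, a <= t <= b -> 0 < y a * y t).
  { apply (continuous_on_pos_forward a b (fun t => y a * y t) a).
    - exact (deriv_on_continuous_on a b _ _ (deriv_on_scal a b (y a) _ _ Hy)).
    - lra.
    - exact (Rsqr_pos_lt _ Hya).
    - intros t Ht Hnonneg. pose proof (Hnonneg t ltac:(lra)).
      pose proof (Rmult_integral_contrapositive _ _ (conj Hya (Hnz t Ht))). lra. }
  destruct (Rlt_or_le 0 (y a)) as [Hpos|Hneg].
  - left. intros t Ht. pose proof (Hsame t Ht). nra.
  - right. intros t Ht. pose proof (Hsame t Ht). nra.
Qed.

Lemma deriv_on_monotone_zero a b q q' : a <= b -> deriv_on a b q q' -> q a = 0 -> q b = 0 ->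
  (forall t, a <= t <= b -> 0 <= q' t) \/ (forall t, a <= t <= b -> q' t <= 0) ->
  forall t, a <= t <= b -> q t = 0.
Proof.
  intros Hab Hq Hqa Hqb [Hinc|Hdec] t Ht.
  - pose proof (deriv_on_nondecreasing a b q q' a t Hq ltac:(lra) ltac:(lra) ltac:(lra)
      ltac:(intros; apply Hinc; lra)).
    pose proof (deriv_on_nondecreasing a b q q' t b Hq ltac:(lra) ltac:(lra) ltac:(lra)
      ltac:(intros; apply Hinc; lra)).
    lra.
  - pose proof (deriv_on_nondecreasing a b _ _ a t (deriv_on_opp a b q q' Hq)
      ltac:(lra) ltac:(lra) ltac:(lra) ltac:(intros; pose proof (Hdec z ltac:(lra)); lra)).
    pose proof (deriv_on_nondecreasing a b _ _ t b (deriv_on_opp a b q q' Hq)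
      ltac:(lra) ltac:(lra) ltac:(lra) ltac:(intros; pose proof (Hdec z ltac:(lra)); lra)).
    lra.
Qed.

Section MaximumPrinciple.

Variables (a b M : R) (A A' U d k : R -> R).
Hypothesis HA : deriv_on a b A A'.
Hypothesis HU : deriv_on a b U (fun t => k t * A t).
Hypothesis HA' : forall t, a <= t <= b -> A' t = U t - d t * A t.
Hypothesis Hd : forall t, a <= t <= b -> 0 <= d t <= M.
Hypothesis Hk : forall t, a <= t <= b -> 0 <= k t.

Lemma max_principle_forward t0 : a <= t0 <= b -> 0 < A t0 -> 0 <= U t0 ->
  forall z, t0 <= z <= b -> 0 < A z.
Proof.
  intros Ht0 HA0 HU0.
  apply (continuous_on_pos_forward a b A t0 (deriv_on_continuous_on a b A A' HA) Ht0 HA0).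
  intros y Hy HAy.
  assert (HUy : forall z, t0 <= z <= y -> 0 <= U z).
  { intros z Hz. apply (Rle_trans _ (U t0)); [exact HU0|].
    apply (deriv_on_nondecreasing a b U _ t0 z HU); try lra.
    intros u Hu. apply Rmult_le_pos; [apply Hk; lra|apply HAy; lra]. }
  assert (Hgrowth : A t0 * exp (M * t0) <= A y * exp (M * y)).
  { apply (deriv_on_nondecreasing a b _ _ t0 y
      (deriv_on_mult a b _ _ _ _ HA (deriv_on_exp_scal a b M))); try lra.
    intros z Hz. rewrite HA' by lra.
    pose proof (exp_pos (M * z)). pose proof (HUy z Hz). pose proof (HAy z Hz).
    pose proof (Hd z ltac:(lra)).
    replace ((U z - d z * A z) * exp (M * z) + A z * (M * exp (M * z)))
      with ((U z + (M - d z) * A z) * exp (M * z)) by ring.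
    apply Rmult_le_pos; nra. }
  pose proof (exp_pos (M * t0)). pose proof (exp_pos (M * y)). nra.
Qed.

Lemma max_principle_backward t0 : a <= t0 <= b -> 0 < A t0 -> U t0 <= 0 ->
  forall z, a <= z <= t0 -> 0 < A z.
Proof.
  intros Ht0 HA0 HU0.
  apply (continuous_on_pos_backward a b A t0 (deriv_on_continuous_on a b A A' HA) Ht0 HA0).
  intros y Hy HAy.
  assert (HUy : forall z, y <= z <= t0 -> U z <= 0).
  { intros z Hz. apply (Rle_trans _ (U t0)); [|exact HU0].
    apply (deriv_on_nondecreasing a b U _ z t0 HU); try lra.
    intros u Hu. apply Rmult_le_pos; [apply Hk; lra|apply HAy; lra]. }
  assert (Hdecay : - A y <= - A t0).
  { apply (deriv_on_nondecreasing a b _ _ y t0 (deriv_on_opp a b A A' HA)); try lra.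
    intros z Hz. rewrite HA' by lra.
    pose proof (HUy z Hz). pose proof (HAy z Hz). pose proof (Hd z ltac:(lra)). nra. }
  lra.
Qed.

Lemma max_principle_nonpos : A a = 0 -> A b = 0 -> forall t, a <= t <= b -> A t <= 0.
Proof.
  intros Ha Hb t Ht. apply Rnot_lt_le. intros Hpos.
  destruct (Rle_or_lt 0 (U t)) as [HUt|HUt].
  - pose proof (max_principle_forward t Ht Hpos HUt b ltac:(lra)). lra.
  - pose proof (max_principle_backward t Ht Hpos (Rlt_le _ _ HUt) a ltac:(lra)). lra.
Qed.

End MaximumPrinciple.

Lemma max_principle a b M A A' U d k : deriv_on a b A A' -> deriv_on a b U (fun t => k t * A t) ->
  (forall t, a <= t <= b -> A' t = U t - d t * A t) ->
  (forall t, a <= t <= b -> 0 <= d t <= M) -> (forall t, a <= t <= b -> 0 <= k t) ->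
  A a = 0 -> A b = 0 -> forall t, a <= t <= b -> A t = 0.
Proof.
  intros HA HU HA' Hd Hk Ha Hb t Ht.
  pose proof (max_principle_nonpos a b M A A' U d k HA HU HA' Hd Hk Ha Hb t Ht).
  enough (- A t <= 0) by lra.
  apply (max_principle_nonpos a b M (fun t => - A t) (fun t => - A' t) (fun t => - U t) d k);
    auto using deriv_on_opp.
  - apply (deriv_on_ext a b _ _ _ _ (deriv_on_opp a b _ _ HU)); intros; [reflexivity|ring].
  - intros s Hs. rewrite HA' by exact Hs. ring.
  - rewrite Ha. ring.
  - rewrite Hb. ring.
Qed.

(** * Coordinates along a ray *)

Definition radial (c s : R) (p : R * R) : R := c * fst p + s * snd p.
Definition transverse (c s : R) (p : R * R) : R := - s * fst p + c * snd p.

Lemma radial_transverse_decomp c s p : c ^ 2 + s ^ 2 = 1 ->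
  p = (radial c s p * c - transverse c s p * s, radial c s p * s + transverse c s p * c).
Proof.
  intros Hcs. destruct p as [p1 p2]. unfold radial, transverse. simpl. f_equal.
  - replace p1 with (p1 * (c ^ 2 + s ^ 2)) at 1 by (rewrite Hcs; ring). ring.
  - replace p2 with (p2 * (c ^ 2 + s ^ 2)) at 1 by (rewrite Hcs; ring). ring.
Qed.

Lemma deriv_on_lincomb a b (alpha beta : R) f g : vderiv_on a b f g ->
  deriv_on a b (fun t => alpha * fst (f t) + beta * snd (f t))
    (fun t => alpha * fst (g t) + beta * snd (g t)).
Proof. intros [H1 H2]. apply deriv_on_plus; apply deriv_on_scal; assumption. Qed.

Lemma nrm_ray r c s : c ^ 2 + s ^ 2 = 1 -> 0 <= r -> nrm (r * c, r * s) = r.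
Proof.
  intros Hcs Hr. unfold nrm. cbn [fst snd].
  replace ((r * c) ^ 2 + (r * s) ^ 2) with (r ^ 2 * (c ^ 2 + s ^ 2)) by ring.
  rewrite Hcs, Rmult_1_r. apply sqrt_pow2, Hr.
Qed.

Lemma nrm_unit c s : nrm (c, s) = 1 -> c ^ 2 + s ^ 2 = 1.
Proof.
  unfold nrm. cbn [fst snd]. intros H.
  rewrite <- (sqrt_sqrt (c ^ 2 + s ^ 2)) by nra. rewrite H. ring.
Qed.

Lemma locally_nonzero (p : R * R) : p <> (0, 0) -> locally p (fun q => q <> (0, 0)).
Proof.
  intros Hp.
  assert (Hr : 0 < Rmax (Rabs (fst p)) (Rabs (snd p))).
  { destruct p as [p1 p2]. simpl.
    destruct (Req_dec p1 0) as [->|H1]; [destruct (Req_dec p2 0) as [->|H2]|].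
    - contradiction.
    - apply (Rlt_le_trans _ (Rabs p2)); [apply Rabs_pos_lt, H2|apply Rmax_r].
    - apply (Rlt_le_trans _ (Rabs p1)); [apply Rabs_pos_lt, H1|apply Rmax_l]. }
  exists (mkposreal _ Hr). intros q [Hq1 Hq2] ->. simpl in Hq1, Hq2.
  change (Rabs (0 - fst p) < Rmax (Rabs (fst p)) (Rabs (snd p))) in Hq1.
  change (Rabs (0 - snd p) < Rmax (Rabs (fst p)) (Rabs (snd p))) in Hq2.
  rewrite Rminus_0_l, Rabs_Ropp in Hq1, Hq2.
  unfold Rmax in *. destruct Rle_dec; lra.
Qed.

Lemma C1_differentiable D D1 D2 p : C1_punctured D D1 D2 -> p <> (0, 0) ->
  differentiable_pt_lim (fun u v => D (u, v)) (fst p) (snd p) (D1 p) (D2 p).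
Proof.
  intros HC Hp. destruct p as [p1 p2]. apply filterdiff_differentiable_pt_lim.
  apply (is_derive_filterdiff (fun u v => D (u, v)) p1 p2 (fun u v => D1 (u, v))).
  - refine (filter_imp _ _ _ (locally_nonzero _ Hp)). intros q Hq.
    rewrite <- surjective_pairing. exact (proj1 (HC q Hq)).
  - exact (proj1 (proj2 (HC _ Hp))).
  - apply (continuous_ext D1); [intros q; now rewrite <- surjective_pairing|].
    exact (proj1 (proj2 (proj2 (HC _ Hp)))).
Qed.

Lemma ray_derive D D1 D2 c s r : C1_punctured D D1 D2 -> c ^ 2 + s ^ 2 = 1 -> 0 < r ->
  is_derive (fun r => D (r * c, r * s)) r (D1 (r * c, r * s) * c + D2 (r * c, r * s) * s).
Proof.
  intros HC Hcs Hr. apply is_derive_Reals.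
  assert (Hp : (r * c, r * s) <> (0, 0)).
  { intros E. injection E as Ec Es. nra. }
  apply (derivable_pt_lim_comp_2d (fun u v => D (u, v))
           (fun r => r * c) (fun r => r * s) r).
  - exact (C1_differentiable D D1 D2 _ HC Hp).
  - apply is_derive_Reals. auto_derive; [exact I|ring].
  - apply is_derive_Reals. auto_derive; [exact I|ring].
Qed.

(** * Rectilinear solutions *)

Section RectilinearSolution.

Variables (D D1 D2 : R * R -> R) (T M c s : R) (x v a : R -> R * R).
Hypothesis HT : 0 < T.
Hypothesis Hcs : c ^ 2 + s ^ 2 = 1.
Hypothesis HC : C1_punctured D D1 D2.
Hypothesis Hray : forall t, -T <= t <= 0 -> 0 < radial c s (x t) /\ transverse c s (x t) = 0.
Hypothesis HD : forall t, -T <= t <= 0 -> 0 <= D (x t) <= M.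
Hypothesis Hxv : vderiv_on (-T) 0 x v.
Hypothesis Hva : vderiv_on (-T) 0 v a.
Hypothesis Hmotion : forall t, -T <= t <= 0 ->
  fst (a t) + D (x t) * fst (v t) = - fst (x t) / nrm (x t) ^ 3 /\
  snd (a t) + D (x t) * snd (v t) = - snd (x t) / nrm (x t) ^ 3.

Let rho t := radial c s (x t).
Let rho' t := radial c s (v t).
Let rho'' t := radial c s (a t).

Lemma rho_pos t : -T <= t <= 0 -> 0 < rho t.
Proof. intros Ht. exact (proj1 (Hray t Ht)). Qed.

Lemma position_on_ray t : -T <= t <= 0 -> x t = (rho t * c, rho t * s).
Proof.
  intros Ht. rewrite (radial_transverse_decomp c s (x t) Hcs) at 1.
  rewrite (proj2 (Hray t Ht)). f_equal; unfold rho; ring.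
Qed.

Lemma velocity_on_ray t : -T <= t <= 0 -> v t = (rho' t * c, rho' t * s).
Proof.
  intros Ht.
  assert (Htr : transverse c s (v t) = 0).
  { apply (deriv_on_unique (-T) 0 (fun t => transverse c s (x t))
      (fun t => transverse c s (v t)) (fun _ => 0)); [lra| | |exact Ht].
    - exact (deriv_on_lincomb _ _ (- s) c x v Hxv).
    - apply (deriv_on_ext _ _ _ _ _ _ (deriv_on_const (-T) 0 0)); [|reflexivity].
      intros z Hz. symmetry. apply (proj2 (Hray z Hz)). }
  rewrite (radial_transverse_decomp c s (v t) Hcs) at 1. rewrite Htr. f_equal; unfold rho'; ring.
Qed.

Lemma radial_motion t : -T <= t <= 0 -> rho'' t + D (x t) * rho' t = - 1 / rho t ^ 2.
Proof.
  intros Ht. pose proof (rho_pos t Ht). destruct (Hmotion t Ht) as [e1 e2].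
  set (dl := D (x t)) in e1, e2 |- *.
  rewrite (position_on_ray t Ht), nrm_ray in e1, e2 by lra. cbn [fst snd] in e1, e2.
  unfold rho'', rho', radial.
  transitivity (c * (fst (a t) + dl * fst (v t)) + s * (snd (a t) + dl * snd (v t))); [ring|].
  rewrite e1, e2. replace (- 1) with (- (c ^ 2 + s ^ 2)) by (rewrite Hcs; ring). field. lra.
Qed.

Variables w w' w'' : R -> R * R.
Hypothesis Hww' : vderiv_on (-T) 0 w w'.
Hypothesis Hw'w'' : vderiv_on (-T) 0 w' w''.
Hypothesis Hvar : variational_eq D D1 D2 T x v w w' w''.
Hypothesis Hw_start : w (-T) = (0, 0).
Hypothesis Hw_end : w 0 = (0, 0).

Let A t := radial c s (w t).
Let A' t := radial c s (w' t).
Let A'' t := radial c s (w'' t).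
Let B t := transverse c s (w t).
Let B' t := transverse c s (w' t).
Let B'' t := transverse c s (w'' t).
Let gradD_w t := D1 (x t) * fst (w t) + D2 (x t) * snd (w t).

Lemma variational_on_ray t : -T <= t <= 0 ->
  B'' t + D (x t) * B' t = - B t / rho t ^ 3 /\
  A'' t + gradD_w t * rho' t + D (x t) * A' t = 2 * A t / rho t ^ 3.
Proof.
  intros Ht. pose proof (rho_pos t Ht). destruct (Hvar t Ht) as [e1 e2].
  change (D1 (x t) * fst (w t) + D2 (x t) * snd (w t)) with (gradD_w t) in e1, e2.
  set (dl := D (x t)) in e1, e2 |- *.
  rewrite (velocity_on_ray t Ht) in e1, e2.
  rewrite (position_on_ray t Ht), nrm_ray in e1, e2 by lra.
  unfold dot in e1, e2. cbn [fst snd] in e1, e2.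
  split.
  - unfold B'', B', B, transverse.
    transitivity (- s * (fst (w'' t) + gradD_w t * (rho' t * c) + dl * fst (w' t))
                  + c * (snd (w'' t) + gradD_w t * (rho' t * s) + dl * snd (w' t))); [ring|].
    rewrite e1, e2. field. lra.
  - unfold A'', A', A, radial.
    replace (gradD_w t * rho' t) with (gradD_w t * rho' t * (c ^ 2 + s ^ 2)) by (rewrite Hcs; ring).
    transitivity (c * (fst (w'' t) + gradD_w t * (rho' t * c) + dl * fst (w' t))
                  + s * (snd (w'' t) + gradD_w t * (rho' t * s) + dl * snd (w' t))); [ring|].
    rewrite e1, e2. replace 2 with (3 * (c ^ 2 + s ^ 2) - 1) by (rewrite Hcs; ring). field. lra.
Qed.

Lemma transverse_variation_vanishes t : -T <= t <= 0 -> B t = 0.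
Proof.
  assert (HB : deriv_on (-T) 0 B B') by exact (deriv_on_lincomb _ _ (- s) c w w' Hww').
  assert (HB' : deriv_on (-T) 0 B' B'') by exact (deriv_on_lincomb _ _ (- s) c w' w'' Hw'w'').
  assert (Hrho : deriv_on (-T) 0 rho rho') by exact (deriv_on_lincomb _ _ c s x v Hxv).
  assert (Hrho' : deriv_on (-T) 0 rho' rho'') by exact (deriv_on_lincomb _ _ c s v a Hva).
  set (W := fun t => B' t * rho t - B t * rho' t).
  assert (HW : deriv_on (-T) 0 W (fun t => - D (x t) * W t)).
  { apply (deriv_on_ext _ _ _ _ _ _ (deriv_on_plus _ _ _ _ _ _
      (deriv_on_mult _ _ _ _ _ _ HB' Hrho)
      (deriv_on_opp _ _ _ _ (deriv_on_mult _ _ _ _ _ _ HB Hrho')))).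
    - intros z Hz. unfold W. ring.
    - intros z Hz. pose proof (rho_pos z Hz).
      pose proof (proj1 (variational_on_ray z Hz)). pose proof (radial_motion z Hz).
      replace (B'' z) with (- D (x z) * B' z - B z / rho z ^ 3) by lra.
      replace (rho'' z) with (- D (x z) * rho' z - 1 / rho z ^ 2) by lra.
      unfold W. field. lra. }
  assert (HWsign : (forall t, -T <= t <= 0 -> 0 <= W t) \/ (forall t, -T <= t <= 0 -> W t <= 0)).
  { apply (gronwall_sign (-T) 0 W _ M ltac:(lra) HW). intros z Hz.
    rewrite Rabs_mult, Rabs_Ropp, Rabs_pos_eq by apply (HD z Hz).
    apply Rmult_le_compat_r; [apply Rabs_pos|apply (HD z Hz)]. }
  assert (Hq : deriv_on (-T) 0 (fun t => B t * / rho t) (fun t => W t / rho t ^ 2)).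
  { apply (deriv_on_ext _ _ _ _ _ _ (deriv_on_mult _ _ _ _ _ _ HB
      (deriv_on_inv _ _ _ _ (fun z Hz => Rgt_not_eq _ _ (rho_pos z Hz)) Hrho))).
    - reflexivity.
    - intros z Hz. pose proof (rho_pos z Hz). unfold W. field. lra. }
  assert (Hq0 : forall t, -T <= t <= 0 -> B t * / rho t = 0).
  { apply (deriv_on_monotone_zero (-T) 0 _ _ ltac:(lra) Hq).
    - unfold B. rewrite Hw_start. unfold transverse. simpl. ring.
    - unfold B. rewrite Hw_end. unfold transverse. simpl. ring.
    - destruct HWsign as [Hpos|Hneg]; [left|right]; intros z Hz;
        pose proof (pow_lt _ 2 (rho_pos z Hz)) as Hrho2.
      + exact (Rdiv_le_0_compat _ _ (Hpos z Hz) Hrho2).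
      + apply Rmult_le_0_r; [exact (Hneg z Hz)|exact (Rlt_le _ _ (Rinv_0_lt_compat _ Hrho2))]. }
  intros Ht. pose proof (rho_pos t Ht). pose proof (Hq0 t Ht).
  replace (B t) with (B t * / rho t * rho t) by (field; lra). nra.
Qed.

Lemma radial_variation_vanishes t : -T <= t <= 0 -> A t = 0.
Proof.
  assert (HA : deriv_on (-T) 0 A A') by exact (deriv_on_lincomb _ _ c s w w' Hww').
  assert (HA' : deriv_on (-T) 0 A' A'') by exact (deriv_on_lincomb _ _ c s w' w'' Hw'w'').
  assert (Hrho : deriv_on (-T) 0 rho rho') by exact (deriv_on_lincomb _ _ c s x v Hxv).
  set (gradD_ray := fun t => D1 (x t) * c + D2 (x t) * s).
  assert (HDx : deriv_on (-T) 0 (fun t => D (x t)) (fun t => gradD_ray t * rho' t)).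
  { apply (deriv_on_ext _ _ _ _ _ _ (deriv_on_comp _ _ (fun r => D (r * c, r * s))
      (fun r => D1 (r * c, r * s) * c + D2 (r * c, r * s) * s) rho rho'
      (fun z Hz => ray_derive D D1 D2 c s (rho z) HC Hcs (rho_pos z Hz)) Hrho));
      intros z Hz; unfold gradD_ray; rewrite (position_on_ray z Hz); reflexivity. }
  assert (HgradD_w : forall t, -T <= t <= 0 -> gradD_w t = gradD_ray t * A t).
  { intros z Hz. unfold gradD_w, gradD_ray. rewrite (radial_transverse_decomp c s (w z) Hcs).
    change (transverse c s (w z)) with (B z). change (radial c s (w z)) with (A z).
    rewrite (transverse_variation_vanishes z Hz). cbn [fst snd]. ring. }
  set (U := fun t => A' t + D (x t) * A t).
  assert (HU : deriv_on (-T) 0 U (fun t => 2 / rho t ^ 3 * A t)).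
  { apply (deriv_on_ext _ _ _ _ _ _ (deriv_on_plus _ _ _ _ _ _ HA'
      (deriv_on_mult _ _ _ _ _ _ HDx HA))); [reflexivity|].
    intros z Hz. pose proof (proj2 (variational_on_ray z Hz)) as E.
    rewrite HgradD_w in E by exact Hz. unfold Rdiv in *. lra. }
  apply (max_principle (-T) 0 M A A' U (fun t => D (x t)) (fun t => 2 / rho t ^ 3) HA HU).
  - intros z Hz. unfold U. ring.
  - exact HD.
  - intros z Hz. pose proof (rho_pos z Hz). apply Rlt_le, Rdiv_lt_0_compat, pow_lt; lra.
  - unfold A. rewrite Hw_start. unfold radial. simpl. ring.
  - unfold A. rewrite Hw_end. unfold radial. simpl. ring.
Qed.

Lemma variation_vanishes t : -T <= t <= 0 -> w t = (0, 0).
Proof.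
  intros Ht. rewrite (radial_transverse_decomp c s (w t) Hcs).
  change (transverse c s (w t)) with (B t). change (radial c s (w t)) with (A t).
  rewrite (transverse_variation_vanishes t Ht), (radial_variation_vanishes t Ht).
  f_equal; ring.
Qed.

End RectilinearSolution.

Theorem lemma3p4 (D D1 D2 : R * R -> R) (T : R) (x : R -> R * R) :
  (forall p, p <> (0, 0) -> 0 <= D p) ->
  (exists M, forall p, p <> (0, 0) -> Rabs (D p) <= M) ->
  C1_punctured D D1 D2 ->
  0 < T ->
  is_solution D T x ->
  rectilinear T x ->
  nondegenerate D D1 D2 T x.
Proof.
  intros HDnn [M HM] HC HT [Hnz [v0 [a0 [Hxv0 [Hva0 Hmotion]]]]] [[c s] [r [Hunit Hr]]]
    v Hxv w w' w'' Hww' Hw'w'' Hvar Hw_start Hw_end.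
  pose proof (nrm_unit c s Hunit) as Hcs. cbn [fst snd] in Hr.
  assert (Hv : forall t, -T <= t <= 0 -> v t = v0 t)
    by exact (vderiv_on_unique (-T) 0 x v v0 ltac:(lra) Hxv Hxv0).
  refine (variation_vanishes D D1 D2 T M c s x v a0 HT Hcs HC _ _ Hxv _ _
            w w' w'' Hww' Hw'w'' Hvar Hw_start Hw_end).
  - intros t Ht. destruct (Hr t Ht) as [Hrt ->]. unfold radial, transverse. cbn [fst snd].
    split; [|ring]. replace (c * (r t * c) + s * (r t * s)) with (r t * (c ^ 2 + s ^ 2)) by ring.
    rewrite Hcs. lra.
  - intros t Ht. split; [exact (HDnn _ (Hnz t Ht))|].
    exact (Rle_trans _ _ _ (Rle_abs _) (HM _ (Hnz t Ht))).
  - apply (vderiv_on_ext _ _ v0); [exact Hva0|]. intros t Ht. symmetry. exact (Hv t Ht).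
  - intros t Ht. rewrite (Hv t Ht). exact (Hmotion t Ht).
Qed.
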